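(* For every $r\in\mathbb{N}$ there exist moulds ${}_r\mathrm{Poin}^\bullet$ on $\mathcal{A}(F)$ and ${}_r\mathrm{poin}^\bullet$ on $A(F)$ such that $$F^r_{\rm Poin}=F_{\rm lin}\Big(\sum_{\mathbf{m}}{}_r\mathrm{Poin}^{\mathbf{m}}D_{\mathbf{m}}\Big)=F_{\rm lin}\Big(\sum_{\mathbf{n}}{}_r\mathrm{poin}^{\mathbf{n}}B_{\mathbf{n}}\Big).$$
   Context: Fix $\nu\ge1$, $\lambda\in\mathbb{C}^\nu$, $\lambda\cdot m=\sum_i\lambda_im_i$, $|m|=m_1+\dots+m_\nu$. Let $f(x)=(e^{\lambda_1}x_1,\dots,e^{\lambda_\nu}x_\nu)+h(x)$ be a local analytic diffeomorphism of $(\mathbb{C}^\nu,0)$, $F(\varphi)=\varphi\circ f$ on $\mathbb{C}[[x]]$, $F_{\rm lin}(x^m)=e^{\lambda\cdot m}x^m$. An operator is homogeneous of degree $n\in\mathbb{Z}^\nu$ if it maps each $x^k$ to a multiple of $x^{k+n}$. Write $F=F_{\rm lin}(\mathrm{Id}+\sum_{n\in A(F)}B_n)=F_{\rm lin}\exp(\sum_{m\in\mathcal{A}(F)}D_m)$ with $B_n$ homogeneous of degree $n$ and $D_m$ homogeneous derivations of degree $m$; $A(F),\mathcal{A}(F)\subset\mathbb{Z}^\nu$ are taken closed under addition (degrees with zero operator allowed). Words: $B_{\mathbf{n}}=B_{n_1}\circ\cdots\circ B_{n_r}$, $D_{\mathbf{m}}$ likewise, identity on the empty word; moulds are complex-valued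 functions on words; sums are formal. Poincaré normal form up to order $r$: $F^0_{\rm Poin}=F$; given $F^{i-1}_{\rm Poin}=F_{\rm lin}\exp(\sum_m{}_iD_m)$ with ${}_iD_m$ its homogeneous derivation components of degree $m$, let $N^{(i)}_k=\{m:{}_iD_m\neq0,\ |m|=k,\ e^{\lambda\cdot m}\neq1\}$, $K_i=\min\{k\ge1:N^{(i)}_k\neq\emptyset\}$, $\mathbf{S}_i=\sum_{m\in N^{(i)}_{K_i}}{}_iD_m/(1-e^{\lambda\cdot m})$, and $F^i_{\rm Poin}=\exp(\mathbf{S}_i)\circ F^{i-1}_{\rm Poin}\circ\exp(-\mathbf{S}_i)$. *)

From mathcomp Require Import all_boot all_order all_algebra.
From mathcomp Require Import all_classical all_reals all_analysis.
From mathcomp.real_closed Require Import complex.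
Set Implicit Arguments. Unset Strict Implicit. Unset Printing Implicit Defensive.
Import Order.TTheory GRing.Theory Num.Theory.
Local Open Scope ring_scope.

Section PoincareMoulds.
Variables (R : realType) (nu : nat).
Local Notation C := (R[i]).

Definition cexp (z : C) : C :=
  Complex (expR (complex.Re z) * cos (complex.Im z))
          (expR (complex.Re z) * sin (complex.Im z)).

(* multi-indices k in N^nu (exponents of monomials x^k) and degrees in Z^nu *)
Definition mi := {ffun 'I_nu -> nat}.
Definition deg := {ffun 'I_nu -> int}.
Definition mtot (k : mi) : nat := (\sum_(i < nu) k i)%N.
Definition dtot (m : deg) : int := \sum_(i < nu) m i.
Definition mdeg (k : mi) : deg := [ffun i => (k i)%:Z].
Definition mdiff (l k : mi) : deg := [ffun i => (l i)%:Z - (k i)%:Z].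
Definition mzero : mi := [ffun _ => 0%N].
Definition unitmi (i : 'I_nu) : mi := [ffun j => nat_of_bool (j == i)].

Definition mbox (N : nat) : seq mi :=
  [seq k <- [seq [ffun i => nat_of_ord (j i)] | j : {ffun 'I_nu -> 'I_N.+1}]
     | (mtot k <= N)%N].

(* formal power fseries C[[x_1..x_nu]]: coefficient functions *)
Definition fseries := mi -> C.
Definition sone : fseries := fun l => (l == mzero)%:R.
Definition smul (a b : fseries) : fseries := fun l =>
  \sum_(j <- mbox (mtot l) | [forall i, (j i <= l i)%N]) a j * b [ffun i => (l i - j i)%N].
Definition spow (a : fseries) (n : nat) : fseries := iter n (smul a) sone.

(* operators on C[[x]], represented by their action on monomials:
   T k l = coefficient of x^l in T(x^k). *)
Definition op := mi -> mi -> C.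
Definition opid : op := fun k l => (k == l)%:R.
Definition opadd (T U : op) : op := fun k l => T k l + U k l.
Definition opopp (T : op) : op := fun k l => - T k l.
(* composition T o U (first U, then T); the intermediate sum is restricted to
   monomials of total degree <= |l|, which is exact for operators T that do not
   decrease the order (all operators occurring below). *)
Definition opcomp (T U : op) : op := fun k l =>
  \sum_(j <- mbox (mtot l)) U k j * T j l.
Definition oppow (T : op) (n : nat) : op := iter n (opcomp T) opid.
(* exp and log of order-increasing operators (finite sums coefficientwise) *)
Definition opexp (D : op) : op := fun k l =>
  \sum_(n < (mtot l - mtot k).+1) oppow D n k l / (n`!)%:R.
Definition oplog (N : op) : op := fun k l =>
  \sum_(n < (mtot l - mtot k).+1 | (0 < n)%N) (-1) ^+ n.+1 * oppow N n k l / n%:R.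
Definition hom (T : op) (n : deg) : op := fun k l =>
  if mdiff l k == n then T k l else 0.
Definition op_nonzero (T : op) : Prop := exists k l, T k l != 0.

Section Diffeo.
Variables (lam : 'I_nu -> C) (h : 'I_nu -> fseries).

Definition elam (m : deg) : C := cexp (\sum_(i < nu) lam i * (m i)%:~R).

(* components of f(x) = (e^{lam_1} x_1, ..., e^{lam_nu} x_nu) + h(x) *)
Definition fcomp (i : 'I_nu) : fseries := fun l =>
  cexp (lam i) * (l == unitmi i)%:R + h i l.

(* F(phi) = phi o f ; F(x^k) = prod_i f_i^{k_i} *)
Definition Fop : op := fun k =>
  foldr smul sone [seq spow (fcomp i) (k i) | i <- enum 'I_nu].
Definition Flin : op := fun k l => (k == l)%:R * elam (mdeg k).
Definition Flininv : op := fun k l => (k == l)%:R / elam (mdeg k).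

(* For G = F_lin (Id + sum_n B_n): the operator sum_n B_n = F_lin^{-1} G - Id *)
Definition Bpart (G : op) : op := opadd (opcomp Flininv G) (opopp opid).
(* For G = F_lin exp(sum_m D_m): the operator sum_m D_m = log(F_lin^{-1} G) *)
Definition Dpart (G : op) : op := oplog (Bpart G).

Definition Bfam (n : deg) : op := hom (Bpart Fop) n.
Definition Dfam (m : deg) : op := hom (Dpart Fop) m.

Definition Nnonempty (G : op) (k : nat) : Prop :=
  exists m : deg, [/\ op_nonzero (hom (Dpart G) m), dtot m = k%:Z & elam m != 1].

Definition Kmin (G : op) : option nat :=
  match pselect (exists k, (0 < k)%N /\ Nnonempty G k) with
  | left ex =>
      Some (@ex_minn (fun k => `[< (0 < k)%N /\ Nnonempty G k >])
              (let: ex_intro k Hk := ex in ex_intro _ k (asboolT Hk)))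
  | right _ => None
  end.

Definition Sop (G : op) : op := fun k l =>
  match Kmin G with
  | Some K => if (dtot (mdiff l k) == K%:Z) && (elam (mdiff l k) != 1)
              then hom (Dpart G) (mdiff l k) k l / (1 - elam (mdiff l k)) else 0
  | None => 0
  end.

Definition PoinStep (G : op) : op :=
  opcomp (opcomp (opexp (Sop G)) G) (opexp (opopp (Sop G))).

Definition FPoin (r : nat) : op := iter r PoinStep Fop.

End Diffeo.

(* formal mould sums sum_{w in A*} M^w Op_w, with Op_w = Op_{w1} o ... o Op_{wr}.
   Applied to x^k, a word w = (n1,...,nr) gives the chain of monomials
   k -> k+nr -> k+nr+n(r-1) -> ... ; only chains of strictly increasing
   total degree (all ending at l) can contribute. *)
Fixpoint allseqs (T : Type) (n : nat) (s : seq T) : seq (seq T) :=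
  if n is n'.+1 then [seq x :: t | x <- s, t <- allseqs n' s] else [:: [::]].

Definition chain_steps (c : seq mi) : seq (mi * mi) := zip c (behead c).
Definition chain_word (c : seq mi) : seq deg :=
  rev [seq mdiff p.2 p.1 | p <- chain_steps c].

Definition mould_sum (A : pred deg) (M : seq deg -> C) (Op : deg -> op) : op :=
  fun k l =>
    M [::] * opid k l +
    \sum_(r < (mtot l).+1) \sum_(mids <- allseqs r (mbox (mtot l)))
      let c := k :: rcons mids l in
      if all (fun p => (mtot p.1 < mtot p.2)%N && A (mdiff p.2 p.1)) (chain_steps c)
      then M (chain_word c) * \prod_(p <- chain_steps c) Op (mdiff p.2 p.1) p.1 p.2
      else 0.

Definition order_ge2 (h : 'I_nu -> fseries) : Prop :=
  forall i k, (mtot k < 2)%N -> h i k = 0.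
Definition convergent (h : 'I_nu -> fseries) : Prop :=
  exists (c rho : R), 0 < rho /\ forall i k, `|h i k| <= Complex (c * rho ^+ mtot k) 0.

Definition add_closed (A : pred deg) : Prop :=
  forall m n, A m -> A n -> A [ffun i => m i + n i].

End PoincareMoulds.

From Pilot Require Import Defs.
From mathcomp Require Import all_boot all_order all_algebra.
From mathcomp Require Import all_classical all_reals all_analysis.
From mathcomp.real_closed Require Import complex.
From mathcomp Require Import zify ring.
Set Implicit Arguments. Unset Strict Implicit. Unset Printing Implicit Defensive.
Import GRing.Theory Num.Theory.
Local Open Scope ring_scope.

(* Mould sums over a fixed family of homogeneous operators are closed under everything the
   Poincare normalisation does.  Composing two mould sums gives the mould sum of the mould
   product (split each chain of monomials where the two factors meet).  Truncated exponentials and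
   logarithms of mould sums without constant term are therefore mould sums.  Multiplying a mould
   by a function of the total weight of the word multiplies the coefficient of x^l in the image
   of x^k by that function of l - k.  So both the homogeneous filtering that defines S_i and
   conjugation by F_lin preserve mould sums.  Finally F_lin^-1 F = Id + sum B_n is a mould sum in
   the B_n, and so is log(F_lin^-1 F) = sum D_m.  Since exp(log(1 + X)) = 1 + X, F_lin^-1 F is
   also a mould sum in the D_m, and induction on r gives both moulds. *)

Lemma sum_seq_delta (C : pzSemiRingType) (T : eqType) (s : seq T) (x : T) (F : T -> C) :
  uniq s -> \sum_(j <- s) (j == x)%:R * F j = (x \in s)%:R * F x.
Proof.
move=> us; case: (boolP (x \in s)) => xs.
  rewrite (bigD1_seq x) //= eqxx big1 ?addr0 // => j /negbTE ->; by rewrite mul0r.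
rewrite mul0r big1_seq // => j /andP [_ js]; case: eqP => [E|]; last by rewrite mul0r.
by move: xs; rewrite -E js.
Qed.

Lemma big_ord_trunc (C : nmodType) (f : nat -> C) m b :
  (forall n, (m < n)%N -> f n = 0) -> (m < b)%N ->
  \sum_(n < b) f n = \sum_(n < m.+1) f n.
Proof.
move=> Hf Hb; rewrite -!(big_mkord xpredT) (@big_cat_nat _ _ _ m.+1) //=.
rewrite [X in _ + X]big1_seq ?addr0 // => i /andP [_ Hi].
by rewrite mem_index_iota in Hi; apply: Hf; lia.
Qed.

Lemma big_allseqs_eq0 (C : nmodType) (T : Type) r (s : seq T) (F : seq T -> C) :
  (forall t, size t = r -> F t = 0) -> \sum_(t <- allseqs r s) F t = 0.
Proof.
elim: r F => [|r IH] F HF /=; first by rewrite big_seq1 HF.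
rewrite big_allpairs_dep big1 // => x _; apply: IH => t Ht; apply: HF; by rewrite /= Ht.
Qed.

Section MultiIndexBox.
Variable nu : nat.

Lemma mtot_ge (x : mi nu) i : (x i <= mtot x)%N.
Proof. by rewrite /mtot (bigD1 i) //= leq_addr. Qed.

Lemma mem_mbox N (x : mi nu) : (x \in mbox nu N) = (mtot x <= N)%N.
Proof.
rewrite /mbox mem_filter; case: (leqP (mtot x) N) => H /=; last by [].
apply/mapP; exists [ffun i => inord (x i) : 'I_N.+1]; first by rewrite mem_enum.
apply/ffunP => i; rewrite !ffunE inordK //.
by rewrite ltnS; apply: leq_trans H; apply: mtot_ge.
Qed.

Lemma uniq_mbox N : uniq (mbox nu N).
Proof.
rewrite /mbox filter_uniq // map_inj_uniq ?enum_uniq //.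
move=> f g /ffunP E; apply/ffunP => i; apply/val_inj; have := E i; by rewrite !ffunE.
Qed.

Lemma big_mbox_shrink (C : nmodType) (F : mi nu -> C) N M : (M <= N)%N ->
  (forall x, (M < mtot x)%N -> F x = 0) ->
  \sum_(x <- mbox nu N) F x = \sum_(x <- mbox nu M) F x.
Proof.
move=> MN HF; rewrite (bigID (fun x => mtot x <= M)%N) /=.
rewrite [X in _ + X]big1 ?addr0; last by move=> x; rewrite -ltnNge => /HF.
rewrite -big_filter; apply: perm_big; apply: uniq_perm.
- by rewrite filter_uniq // uniq_mbox.
- by apply: uniq_mbox.
move=> x; rewrite mem_filter !mem_mbox; case: leqP => //= H.
by rewrite (leq_trans H MN).
Qed.

Lemma sum_mbox_delta (C : pzSemiRingType) (F : mi nu -> C) l :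
  \sum_(j <- mbox nu (mtot l)) (j == l)%:R * F j = F l.
Proof. by rewrite sum_seq_delta ?uniq_mbox // mem_mbox leqnn mul1r. Qed.

Definition madd (a b : mi nu) : mi nu := [ffun i => (a i + b i)%N].
Definition msub (a b : mi nu) : mi nu := [ffun i => (a i - b i)%N].
Definition mscale (n : nat) (a : mi nu) : mi nu := [ffun i => (n * a i)%N].

Lemma mtotD a b : mtot (madd a b) = (mtot a + mtot b)%N.
Proof. by rewrite /mtot -big_split; apply: eq_bigr => i _; rewrite ffunE. Qed.

Lemma leq_mtot (a b : mi nu) : [forall i, a i <= b i]%N -> (mtot a <= mtot b)%N.
Proof. by move=> /forallP H; apply: leq_sum => i _; apply: H. Qed.

Lemma mtotB (l j : mi nu) : [forall i, j i <= l i]%N -> mtot (msub l j) = (mtot l - mtot j)%N.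
Proof.
move=> /forallP H; have <- : (mtot (msub l j) + mtot j)%N = mtot l.
  by rewrite /mtot -big_split; apply: eq_bigr => i _ /=; rewrite ffunE subnK.
by rewrite addnK.
Qed.

End MultiIndexBox.

Definition log1p_coef (F : fieldType) (n : nat) : F := (-1) ^+ n.+1 / n%:R.

Section Moulds.
Variables (C : fieldType) (T : Type).
Local Notation mould := (seq T -> C).

Definition mould_shift (M : mould) (a : T) : mould := fun w => M (rcons w a).

Definition mould_one : mould := fun w => (size w == 0%N)%:R.

Definition mould_mul (M N : mould) : mould :=
  fun w => \sum_(i < (size w).+1) M (take i w) * N (drop i w).

Definition mould_pow (M : mould) n : mould := iter n (mould_mul M) mould_one.

Definition mould_exp (M : mould) : mould :=
  fun w => \sum_(n < (size w).+1) (n`!%:R)^-1 * mould_pow M n w.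

Definition mould_log (M : mould) : mould :=
  fun w => \sum_(n < (size w).+1) log1p_coef C n * mould_pow M n w.

Lemma mould_mul_nil M N : mould_mul M N [::] = M [::] * N [::].
Proof. by rewrite /mould_mul big_ord_recl big_ord0 addr0. Qed.

Lemma mould_shift_mul M N a w :
  mould_shift (mould_mul M N) a w = N [::] * mould_shift M a w + mould_mul M (mould_shift N a) w.
Proof.
rewrite /mould_shift /mould_mul size_rcons big_ord_recr /=.
rewrite take_oversize ?size_rcons // drop_oversize ?size_rcons //.
rewrite addrC mulrC; congr (_ + _); apply: eq_bigr => i _.
have Hi : (i <= size w)%N by have := ltn_ord i.
by rewrite /= drop_rcons // -cats1 takel_cat.
Qed.

Lemma mould_pow_short M n w : M [::] = 0 -> (size w < n)%N -> mould_pow M n w = 0.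
Proof.
move=> M0; elim: n w => // n IH w Hw /=.
rewrite -/(mould_pow M n) /mould_mul big1 // => i _.
case: (posnP i) => [->|Hi]; first by rewrite take0 M0 mul0r.
rewrite IH ?mulr0 // size_drop; have := ltn_ord i; move: Hi Hw; move: (i : nat) => j; lia.
Qed.

Lemma mould_exp_nil M : mould_exp M [::] = 1.
Proof. by rewrite /mould_exp big_ord1 /= /mould_one /= mulr1 invr1. Qed.

Lemma mould_log_nil M : mould_log M [::] = 0.
Proof. by rewrite /mould_log big_ord1 /= /log1p_coef invr0 mulr0 mul0r. Qed.

End Moulds.
Arguments mould_one {C T}.

Section Weights.
Variable nu : nat.
Local Notation deg := (deg nu).

Definition deg0 : deg := [ffun _ => 0].
Definition degD (m n : deg) : deg := [ffun i => m i + n i].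
Definition word_weight (w : seq deg) : deg := foldr degD deg0 w.

Lemma word_weight_rcons w a : word_weight (rcons w a) = degD (word_weight w) a.
Proof.
elim: w => [|b w IH] /=; first by apply/ffunP => i; rewrite !ffunE addr0 add0r.
by rewrite IH; apply/ffunP => i; rewrite !ffunE addrA.
Qed.

Lemma mdiffnn (k : mi nu) : mdiff k k = deg0.
Proof. by apply/ffunP => i; rewrite !ffunE subrr. Qed.

Lemma mdiffD (l x k : mi nu) : degD (mdiff l x) (mdiff x k) = mdiff l k.
Proof. by apply/ffunP => i; rewrite !ffunE addrA subrK. Qed.

End Weights.

Section MouldSum.
Variables (R : realType) (nu : nat) (P : pred (deg nu)) (Op : deg nu -> op R nu).
Local Notation C := R[i].
Local Notation mi := (mi nu).
Local Notation deg := (deg nu).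
Local Notation msum M := (mould_sum P M Op).

Definition admissible (k x : mi) := (mtot k < mtot x)%N && P (mdiff x k).

Definition chain_term (M : seq deg -> C) (k l : mi) (mids : seq mi) : C :=
  let c := k :: rcons mids l in
  if all (fun p => admissible p.1 p.2) (chain_steps c)
  then M (chain_word c) * \prod_(p <- chain_steps c) Op (mdiff p.2 p.1) p.1 p.2
  else 0.

Definition chain_sum (M : seq deg -> C) (k l : mi) : C :=
  \sum_(r < (mtot l).+1) \sum_(mids <- allseqs r (mbox nu (mtot l)))
    chain_term M k l mids.

Lemma mould_sumE M k l : msum M k l = M [::] * opid R k l + chain_sum M k l.
Proof. by []. Qed.

Lemma admissible_ltn k x : admissible k x -> (mtot k < mtot x)%N.
Proof. by case/andP. Qed.

Lemma mtot_chain_last (a : mi) s :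
  all (fun p => admissible p.1 p.2) (chain_steps (a :: s)) ->
  (mtot a + size s <= mtot (last a s))%N.
Proof.
elim: s a => [|b s IH] a /=; first by rewrite addn0.
case/andP => /admissible_ltn ab /IH; lia.
Qed.

Lemma chain_term_long M k l mids :
  (mtot l < mtot k + (size mids).+1)%N -> chain_term M k l mids = 0.
Proof.
rewrite /chain_term; case: ifP => // /mtot_chain_last.
rewrite size_rcons last_rcons; lia.
Qed.

Lemma chain_term_nil M k l : chain_term M k l [::] =
  if admissible k l then M [:: mdiff l k] * Op (mdiff l k) k l else 0.
Proof. by rewrite /chain_term /chain_word /chain_steps /= big_seq1 andbT. Qed.

Lemma chain_term_cons M k l x t : chain_term M k l (x :: t) =
  if admissible k x then Op (mdiff x k) k x * chain_term (mould_shift M (mdiff x k)) x l t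
  else 0.
Proof.
rewrite /chain_term /= -/(chain_steps (x :: rcons t l)).
case: (admissible k x) => //=.
case: ifP => _; last by rewrite mulr0.
by rewrite big_cons /chain_word /= rev_cons /mould_shift mulrCA.
Qed.

Lemma chain_sum_rec M k l : chain_sum M k l = chain_term M k l [::] +
  \sum_(x <- mbox nu (mtot l))
    (if admissible k x then Op (mdiff x k) k x * chain_sum (mould_shift M (mdiff x k)) x l
     else 0).
Proof.
rewrite /chain_sum big_ord_recl /= big_seq1; congr (_ + _).
under eq_bigr do rewrite big_allpairs_dep.
rewrite exchange_big /=; apply: eq_bigr => x _.
under eq_bigr do under eq_bigr do rewrite chain_term_cons.
case: ifP => _; last by rewrite big1 // => i _; rewrite big1.
rewrite big_ord_recr /= [X in _ + X]big_allseqs_eq0 ?addr0; last first.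
  by move=> t Ht; rewrite chain_term_long // Ht; lia.
rewrite mulr_sumr; apply: eq_bigr => i _; by rewrite mulr_sumr.
Qed.

Lemma mould_sum_rec M k l : msum M k l = M [::] * opid R k l +
  \sum_(x <- mbox nu (mtot l))
    (if admissible k x then Op (mdiff x k) k x * msum (mould_shift M (mdiff x k)) x l
     else 0).
Proof.
rewrite mould_sumE chain_sum_rec; congr (_ + _).
have if_mulrDr b (a x y : C) :
    (if b then a * (x + y) else 0) = (if b then a * x else 0) + (if b then a * y else 0).
  by case: b; rewrite ?mulrDr ?addr0.
under [in RHS]eq_bigr do rewrite mould_sumE if_mulrDr.
rewrite big_split /=; congr (_ + _).
rewrite chain_term_nil -[LHS](sum_mbox_delta
  (fun x => if admissible k x then M [:: mdiff x k] * Op (mdiff x k) k x else 0)).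
apply: eq_bigr => x _.
rewrite /opid /mould_shift /=.
case: eqP => [->|_]; case: ifP => _; rewrite ?mul0r ?mulr0 //.
by rewrite mul1r mulr1 mulrC.
Qed.

Lemma mould_sum_low M k l : (mtot l <= mtot k)%N -> msum M k l = M [::] * opid R k l.
Proof.
move=> H; rewrite mould_sumE /chain_sum big1 ?addr0 // => r _.
by rewrite big1 // => t _; rewrite chain_term_long //; lia.
Qed.

Lemma mould_sum_lt M k l : (mtot l < mtot k)%N -> msum M k l = 0.
Proof.
move=> H; rewrite mould_sum_low ?(ltnW H) // /opid.
by case: eqP => [E|_]; [move: H; rewrite E ltnn | rewrite mulr0].
Qed.

Lemma mould_sum_rec_le N M k l : (mtot l <= N)%N -> msum M k l = M [::] * opid R k l +
  \sum_(x <- mbox nu N)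
    (if admissible k x then Op (mdiff x k) k x * msum (mould_shift M (mdiff x k)) x l
     else 0).
Proof.
move=> H; rewrite mould_sum_rec (big_mbox_shrink H) // => x Hx.
by rewrite mould_sum_lt // mulr0; case: ifP.
Qed.

Lemma eq_mould_sum M N k l : M =1 N -> msum M k l = msum N k l.
Proof. by move=> /funext ->. Qed.

Lemma mould_sum_lin a b M N k l :
  mould_sum P (fun w => a * M w + b * N w) Op k l = a * msum M k l + b * msum N k l.
Proof.
have chain_term_lin mids : chain_term (fun w => a * M w + b * N w) k l mids =
    a * chain_term M k l mids + b * chain_term N k l mids.
  rewrite /chain_term; case: ifP => _; last by rewrite !mulr0 addr0.
  by rewrite mulrDl !mulrA.
rewrite !mould_sumE.
have -> : chain_sum (fun w => a * M w + b * N w) k l =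
    a * chain_sum M k l + b * chain_sum N k l.
  rewrite /chain_sum !mulr_sumr -big_split; apply: eq_bigr => r _.
  by rewrite !mulr_sumr -big_split; apply: eq_bigr => t _.
ring.
Qed.

Lemma mould_sum0 k l : msum (fun _ => 0) k l = 0.
Proof.
rewrite (@eq_mould_sum _ (fun w => 0 * 0 + 0 * 0)) => [|w]; last by rewrite mul0r addr0.
by rewrite mould_sum_lin !mul0r addr0.
Qed.

Lemma mould_sumZ a M k l : mould_sum P (fun w => a * M w) Op k l = a * msum M k l.
Proof.
rewrite (@eq_mould_sum _ (fun w => a * M w + 0 * M w)) => [|w]; last by rewrite mul0r addr0.
by rewrite mould_sum_lin mul0r addr0.
Qed.

Lemma mould_sum_sum n (F : nat -> seq deg -> C) k l :
  mould_sum P (fun w => \sum_(i < n) F i w) Op k l = \sum_(i < n) msum (F i) k l.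
Proof.
elim: n => [|n IH].
  by rewrite (@eq_mould_sum _ (fun _ => 0)) ?mould_sum0 ?big_ord0 // => w; rewrite big_ord0.
transitivity (mould_sum P (fun w => 1 * \sum_(i < n) F i w + 1 * F n w) Op k l).
  by apply: eq_mould_sum => w; rewrite big_ord_recr !mul1r.
by rewrite mould_sum_lin IH big_ord_recr !mul1r.
Qed.

Lemma mould_sum_one : msum mould_one = @opid R nu.
Proof.
apply/funext => k; apply/funext => l.
rewrite mould_sum_rec /mould_one /= mul1r big1 ?addr0 // => x _.
case: ifP => _ //.
rewrite (@eq_mould_sum _ (fun _ => 0)) ?mould_sum0 ?mulr0 // => w.
by rewrite /mould_shift size_rcons.
Qed.

(* Splitting a chain k -> l at its first step gives the recursion of both sides. *)
Lemma mould_sum_mul M N : opcomp (msum M) (msum N) = msum (mould_mul M N).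
Proof.
apply/funext => k; apply/funext => l.
have [n Hn] := ubnP (mtot l - mtot k).
elim: n N k l Hn => // n IH N k l Hn.
case: (ltnP (mtot l) (mtot k)) => Hkl.
  rewrite mould_sum_lt // /opcomp big1_seq // => j /andP [_ Hj].
  by rewrite mould_sum_lt ?mul0r //; rewrite mem_mbox in Hj; lia.
rewrite /opcomp.
rewrite (eq_big_seq (fun j => (N [::] * opid R k j + \sum_(x <- mbox nu (mtot l))
   (if admissible k x then Op (mdiff x k) k x * msum (mould_shift N (mdiff x k)) x j else 0))
   * msum M j l)); last first.
  by move=> j; rewrite mem_mbox => Hj; rewrite (mould_sum_rec_le N k Hj).
under eq_bigr do rewrite mulrDl.
rewrite big_split /=.
rewrite (eq_bigr (fun j => (j == k)%:R * (N [::] * msum M j l))); last first.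
  by move=> j _; rewrite /opid eq_sym mulrA [_ * N _]mulrC.
rewrite sum_seq_delta ?uniq_mbox // mem_mbox Hkl mul1r.
under eq_bigr do rewrite mulr_suml.
rewrite exchange_big /=.
rewrite (eq_big_seq (fun x => if admissible k x then Op (mdiff x k) k x *
   msum (mould_mul M (mould_shift N (mdiff x k))) x l else 0)); last first.
  move=> x; rewrite mem_mbox => Hx.
  case: ifP => Hs; last by rewrite big1 // => j _; rewrite mul0r.
  rewrite -IH; last by have := admissible_ltn Hs; lia.
  by rewrite /opcomp mulr_sumr; apply: eq_bigr => j _; rewrite mulrA.
rewrite (mould_sum_rec_le M k (leqnn _)) (mould_sum_rec_le (mould_mul M N) k (leqnn _)).
rewrite mould_mul_nil mulrDr !mulr_sumr -addrA -big_split /=.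
rewrite mulrCA -mulrA; congr (_ + _); apply: eq_bigr => x _.
case: ifP => _; last by rewrite mulr0 addr0.
rewrite (@eq_mould_sum (mould_shift (mould_mul M N) (mdiff x k)) (fun w =>
   N [::] * mould_shift M (mdiff x k) w + 1 * mould_mul M (mould_shift N (mdiff x k)) w));
  last by move=> w; rewrite mould_shift_mul mul1r.
rewrite mould_sum_lin mul1r; ring.
Qed.

Lemma mould_sum_pow M n : oppow (msum M) n = msum (mould_pow M n).
Proof.
elim: n => [|n IH]; first by rewrite mould_sum_one.
by rewrite /= -/(oppow (msum M) n) IH mould_sum_mul.
Qed.

Lemma mould_sum_weight (phi : deg -> C) M k l :
  mould_sum P (fun w => phi (word_weight w) * M w) Op k l = phi (mdiff l k) * msum M k l.
Proof.
have [n Hn] := ubnP (mtot l - mtot k).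
elim: n phi M k l Hn => // n IH phi M k l Hn.
case: (ltnP (mtot l) (mtot k)) => Hkl; first by rewrite !mould_sum_lt // mulr0.
rewrite !(mould_sum_rec_le _ k (leqnn (mtot l))) mulrDr mulr_sumr; congr (_ + _).
  rewrite /opid; case: eqP => [->|_]; last by rewrite !mulr0.
  by rewrite mdiffnn /= mulrA.
apply: eq_big_seq => x; rewrite mem_mbox => Hx; case: ifP => Hs; last by rewrite mulr0.
rewrite mulrCA -(mdiffD l x k) -(IH (fun m => phi (degD m (mdiff x k)))); last first.
  by have := admissible_ltn Hs; lia.
by congr (_ * _); apply: eq_mould_sum => w; rewrite /mould_shift word_weight_rcons.
Qed.

Lemma mould_sum_eq_short M N k l :
  (forall w, (size w <= mtot l - mtot k)%N -> M w = N w) -> msum M k l = msum N k l.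
Proof.
have [n Hn] := ubnP (mtot l - mtot k).
elim: n M N k l Hn => // n IH M N k l Hn HMN.
case: (ltnP (mtot l) (mtot k)) => Hkl; first by rewrite !mould_sum_lt.
rewrite !(mould_sum_rec_le _ k (leqnn (mtot l))) HMN //; congr (_ + _).
apply: eq_big_seq => x; rewrite mem_mbox => Hx; case: ifP => Hs //.
have Hkx := admissible_ltn Hs.
rewrite (IH _ (mould_shift N (mdiff x k))) //; first by lia.
by move=> w Hw; rewrite /mould_shift HMN // size_rcons; lia.
Qed.

Lemma mould_sum_series M (c : nat -> C) k l : M [::] = 0 ->
  \sum_(n < (mtot l - mtot k).+1) c n * oppow (msum M) n k l =
  mould_sum P (fun w => \sum_(n < (size w).+1) c n * mould_pow M n w) Op k l.
Proof.
move=> M0; transitivity (mould_sum P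
    (fun w => \sum_(n < (mtot l - mtot k).+1) c n * mould_pow M n w) Op k l).
  rewrite (mould_sum_sum _ (fun n w => c n * mould_pow M n w)).
  by apply: eq_bigr => n _; rewrite mould_sumZ mould_sum_pow.
apply: mould_sum_eq_short => w Hw.
rewrite (big_ord_trunc (f := fun n => c n * mould_pow M n w) (m := size w)) //.
by move=> n Hn; rewrite mould_pow_short ?mulr0.
Qed.

Lemma opexp_mould_sum M : M [::] = 0 -> opexp (msum M) = msum (mould_exp M).
Proof.
move=> M0; apply/funext => k; apply/funext => l.
rewrite /opexp -(mould_sum_series (fun n => (n`!%:R)^-1) k l M0).
by apply: eq_bigr => n _; rewrite mulrC.
Qed.

Lemma oplog_mould_sum M : M [::] = 0 -> oplog (msum M) = msum (mould_log M).
Proof.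
move=> M0; apply/funext => k; apply/funext => l.
rewrite /oplog -(mould_sum_series (log1p_coef C) k l M0) big_mkcond /=.
apply: eq_bigr => n _; rewrite /log1p_coef.
by case: (posnP n) => [->|_] /=; rewrite ?invr0 ?mulr0 ?mul0r // mulrAC.
Qed.

End MouldSum.

Section ComplexExp.
Variable R : realType.
Local Notation C := R[i].

Lemma cexpD (a b : C) : cexp (a + b) = cexp a * cexp b.
Proof.
case: a => a1 a2; case: b => b1 b2; rewrite /cexp /=.
by rewrite expRD cosD sinD; congr Complex; ring.
Qed.

Lemma cexp0 : cexp (0 : C) = 1.
Proof. by rewrite /cexp /= expR0 cos0 sin0 mul1r mulr0. Qed.

Lemma cexp_neq0 (z : C) : cexp z != 0.
Proof.
apply/eqP => H; have := cexpD z (- z); rewrite subrr cexp0 H mul0r.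
by move/eqP; rewrite oner_eq0.
Qed.

Lemma cexpMn (z : C) n : cexp (z *+ n) = cexp z ^+ n.
Proof. by elim: n => [|n IH]; rewrite ?mulr0n ?cexp0 // mulrS cexpD IH exprS. Qed.

End ComplexExp.

Section PoincareStep.
Variables (R : realType) (nu : nat) (lam : 'I_nu -> R[i]).
Local Notation C := R[i].
Local Notation mi := (mi nu).
Local Notation deg := (deg nu).

Lemma elamD (m n : deg) : elam lam (degD m n) = elam lam m * elam lam n.
Proof.
rewrite /elam -cexpD -big_split /=; congr cexp; apply: eq_bigr => i _.
by rewrite ffunE intrD mulrDr.
Qed.

Lemma elam0 : elam lam (deg0 nu) = 1.
Proof. by rewrite /elam big1 ?cexp0 // => i _; rewrite ffunE mulr0. Qed.

Lemma elam_neq0 m : elam lam m != 0.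
Proof. exact: cexp_neq0. Qed.

Lemma elam_mdeg (k l : mi) : elam lam (mdeg l) = elam lam (mdeg k) * elam lam (mdiff l k).
Proof.
by rewrite -elamD; congr elam; apply/ffunP => i; rewrite !ffunE addrC subrK.
Qed.

Lemma Flin_compE (T : op R nu) k l : opcomp (Flin lam) T k l = T k l * elam lam (mdeg l).
Proof.
rewrite /opcomp /Flin -(sum_mbox_delta (fun j => T k j * elam lam (mdeg j))).
by apply: eq_bigr => j _; rewrite mulrCA.
Qed.

Lemma Flininv_compE (T : op R nu) k l :
  opcomp (Flininv lam) T k l = T k l / elam lam (mdeg l).
Proof.
rewrite /opcomp /Flininv -(sum_mbox_delta (fun j => T k j / elam lam (mdeg j))).
by apply: eq_bigr => j _; rewrite mulrCA.
Qed.

Definition Sop_weight (G : op R nu) (m : deg) : C :=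
  match Kmin lam G with
  | Some K => if (dtot m == K%:Z) && (elam lam m != 1) then (1 - elam lam m)^-1 else 0
  | None => 0
  end.

Variables (P : pred deg) (Op : deg -> op R nu).
Local Notation msum M := (mould_sum P M Op).

Lemma Bpart_mould_sum M G : G = opcomp (Flin lam) (msum M) ->
  Bpart lam G = mould_sum P (fun w => 1 * M w + (-1) * mould_one w) Op.
Proof.
move=> EG; apply/funext => k; apply/funext => l.
rewrite /Bpart /opadd /opopp Flininv_compE EG Flin_compE mulfK ?elam_neq0 //.
by rewrite mould_sum_lin (mould_sum_one P Op); ring.
Qed.

Lemma Sop_mould_sum M G : M [::] = 0 -> Bpart lam G = msum M ->
  Sop lam G = mould_sum P (fun w => Sop_weight G (word_weight w) * mould_log M w) Op.
Proof.
move=> M0 EB; apply/funext => k; apply/funext => l.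
rewrite mould_sum_weight -(oplog_mould_sum _ _ M0) -EB /Sop /Sop_weight /Defs.hom eqxx.
case: (Kmin lam G) => [K|]; last by rewrite mul0r.
by case: ifP => _; rewrite ?mul0r // mulrC.
Qed.

(* Conjugating exp(S_i) by F_lin multiplies its (k, l) coefficient by e^{-lambda.(l - k)}, a
   weight factor, so F^i_Poin stays of the form F_lin (mould sum). *)
Lemma PoinStep_mould_sum M G : M [::] = 1 -> G = opcomp (Flin lam) (msum M) ->
  exists M', M' [::] = 1 /\ PoinStep lam G = opcomp (Flin lam) (msum M').
Proof.
move=> M1 EG.
pose B w := 1 * M w + (-1) * mould_one w.
have B0 : B [::] = 0 by rewrite /B M1 /mould_one /=; ring.
pose S w := Sop_weight G (word_weight w) * mould_log B w.
have S0 : S [::] = 0 by rewrite /S mould_log_nil mulr0.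
have ES : Sop lam G = msum S := Sop_mould_sum B0 (Bpart_mould_sum EG).
have ESN : opopp (Sop lam G) = msum (fun w => - S w).
  apply/funext => k; apply/funext => l.
  by rewrite ES /opopp -mulN1r -mould_sumZ; apply: eq_mould_sum => w; rewrite mulN1r.
have SN0 : (fun w => - S w) [::] = 0 by rewrite /= S0 oppr0.
pose X w := (elam lam (word_weight w))^-1 * mould_exp S w.
exists (mould_mul (mould_mul X M) (mould_exp (fun w => - S w))); split.
  by rewrite !mould_mul_nil mould_exp_nil /X mould_exp_nil /= elam0 invr1 M1 !mulr1.
apply/funext => k; apply/funext => l.
rewrite Flin_compE /PoinStep ESN ES -!mould_sum_mul -(opexp_mould_sum _ _ SN0).
have conj_Flin j : opcomp (opexp (msum S)) G j l =
    opcomp (msum X) (msum M) j l * elam lam (mdeg l).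
  rewrite /opcomp mulr_suml; apply: eq_bigr => i _.
  rewrite (opexp_mould_sum _ _ S0) EG Flin_compE /X.
  rewrite (mould_sum_weight P Op (fun m => (elam lam m)^-1)) (elam_mdeg i l).
  by field; rewrite elam_neq0.
rewrite {1}/opcomp mulr_suml; apply: eq_bigr => j _.
by rewrite conj_Flin mulrA.
Qed.

End PoincareStep.

Section TruncatedExpLog.
Variable F : numFieldType.

Definition log1p_poly (N : nat) : {poly F} := \poly_(p < N.+1) log1p_coef F p.
Definition exp_log1p_poly_lt (N : nat) : {poly F} :=
  \sum_(n < N) (n`!%:R)^-1 *: log1p_poly N ^+ n.
Definition exp_log1p_poly (N : nat) : {poly F} :=
  \sum_(n < N.+1) (n`!%:R)^-1 *: log1p_poly N ^+ n.

Lemma log1p_coef0 : log1p_coef F 0 = 0.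
Proof. by rewrite /log1p_coef invr0 mulr0. Qed.

Lemma coef_log1p_poly_expr_small N n j : (j < n)%N -> (log1p_poly N ^+ n)`_j = 0.
Proof.
elim: n j => // n IH j Hj; rewrite exprS coefM big1 // => i _.
case: (posnP i) => [->|Hi]; first by rewrite /log1p_poly coef_poly /= log1p_coef0 mul0r.
by rewrite IH ?mulr0 //; have := ltn_ord i; lia.
Qed.

Lemma coef_deriv_log1p_poly N i : (i < N)%N -> (log1p_poly N)^`()`_i = (-1) ^+ i.
Proof.
move=> Hi; rewrite coef_deriv /log1p_poly coef_poly ltnS Hi /log1p_coef.
by rewrite -(mulr_natr ((-1) ^+ i.+2 / i.+1%:R)) mulfVK // !exprS !mulN1r opprK.
Qed.

Lemma coef_deriv_log1p_poly_mul1X N i : (i < N)%N ->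
  ((1 + 'X) * (log1p_poly N)^`())`_i = (i == 0%N)%:R.
Proof.
move=> Hi; rewrite mulrDl mul1r coefD coefXM coef_deriv_log1p_poly //.
case: i Hi => [|i] Hi /=; first by rewrite expr0 addr0.
by rewrite coef_deriv_log1p_poly ?exprS ?mulN1r ?addNr //; lia.
Qed.

Lemma coef_exp_log1p_poly_lt N i : (i < N)%N ->
  (exp_log1p_poly_lt N)`_i = (exp_log1p_poly N)`_i.
Proof.
move=> Hi; rewrite /exp_log1p_poly big_ord_recr coefD coefZ.
by rewrite coef_log1p_poly_expr_small // mulr0 addr0.
Qed.

Lemma coef_deriv_exp_log1p_poly N i :
  ((log1p_poly N)^`() * exp_log1p_poly_lt N)`_i = (exp_log1p_poly N)`_i.+1 *+ i.+1.
Proof.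
rewrite /exp_log1p_poly coef_sum -sumrMnl big_ord_recl /= expr0 coefZ coef1 /= mulr0 mul0rn.
rewrite add0r /exp_log1p_poly_lt mulr_sumr coef_sum; apply: eq_bigr => n _.
rewrite /bump /= add1n -scalerAr !coefZ -mulrnAr -coef_deriv deriv_exp /= coefMn.
rewrite mulrnAr -mulrnAl; congr (_ * _); rewrite factS natrM invfM.
by rewrite -(mulr_natl ((n.+1)%:R^-1 * n`!%:R^-1) n.+1) mulrA mulfV ?mul1r.
Qed.

(* E := exp(log(1 + X)) satisfies (1 + X) E' = E up to order N. *)
Lemma coef_exp_log1p_poly_rec N i : (i < N)%N ->
  (exp_log1p_poly N)`_i.+1 *+ i.+1 + (exp_log1p_poly N)`_i *+ i = (exp_log1p_poly N)`_i.
Proof.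
move=> Hi.
have <- : ((1 + 'X) * ((log1p_poly N)^`() * exp_log1p_poly_lt N))`_i =
    (exp_log1p_poly N)`_i.+1 *+ i.+1 + (exp_log1p_poly N)`_i *+ i.
  rewrite mulrDl mul1r coefD coefXM coef_deriv_exp_log1p_poly; congr (_ + _).
  by case: i {Hi} => [|i] /=; rewrite ?mulr0n // coef_deriv_exp_log1p_poly.
rewrite mulrA coefM (bigD1 ord0) //= subn0 coef_deriv_log1p_poly_mul1X; last lia.
rewrite mulr1n mul1r big1 ?addr0 ?coef_exp_log1p_poly_lt // => j /eqP Hj.
rewrite coef_deriv_log1p_poly_mul1X; last by have := ltn_ord j; lia.
by case: eqP => [E|_]; [case: Hj; apply: val_inj | rewrite mul0r].
Qed.

Lemma coef_exp_log1p_poly N i : (i <= N)%N -> (exp_log1p_poly N)`_i = (i <= 1)%N%:R.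
Proof.
elim: i => [|i IH] Hi.
  rewrite /exp_log1p_poly coef_sum big_ord_recl big1 => [|n _]; last first.
    by rewrite coefZ coef_log1p_poly_expr_small ?mulr0.
  by rewrite addr0 expr0 coefZ coef1 /= mulr1 invr1.
have := coef_exp_log1p_poly_rec Hi; rewrite IH ?(ltnW Hi) //.
case: i {IH Hi} => [|[|i]] /=; first by rewrite mulr1n addr0.
  by rewrite mulr1n -{2}[1]add0r => /addIr /eqP; rewrite mulrn_eq0 => /eqP.
by rewrite mul0rn addr0 => /eqP; rewrite mulrn_eq0 => /eqP.
Qed.

End TruncatedExpLog.

Section LengthOneMould.
Variables (C : numFieldType) (T : Type).
Local Notation mould := (seq T -> C).

Definition mould_len1 : mould := fun w => (size w == 1%N)%:R.

Lemma mould_pow_len1 n w : mould_pow mould_len1 n w = (size w == n)%:R.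
Proof.
elim: n w => [|n IH] w //=.
rewrite -/(mould_pow mould_len1 n) /mould_mul.
rewrite (eq_bigr (fun i : 'I_(size w).+1 => (i == 1%N :> nat)%:R * ((size w - i)%N == n)%:R));
  last by move=> i _; rewrite /mould_len1 IH size_drop size_takel // -ltnS.
rewrite -(big_mkord xpredT (fun i => (i == 1%N)%:R * ((size w - i)%N == n)%:R)).
rewrite sum_seq_delta ?iota_uniq // mem_index_iota.
by case: (size w) => [|s] /=; rewrite ?mul0r ?mul1r ?subn1.
Qed.

Lemma mould_series_len1 (c : nat -> C) w :
  \sum_(n < (size w).+1) c n * mould_pow mould_len1 n w = c (size w).
Proof.
rewrite big_ord_recr /= mould_pow_len1 eqxx mulr1 big1 ?add0r // => n _.
by rewrite mould_pow_len1 gtn_eqF ?mulr0.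
Qed.

Lemma mould_log_len1 : mould_log mould_len1 = fun w => log1p_coef C (size w).
Proof. by apply/funext => w; rewrite /mould_log mould_series_len1. Qed.

Lemma mould_pow_log_len1 N n w : (size w <= N)%N ->
  mould_pow (mould_log mould_len1) n w = (log1p_poly C N ^+ n)`_(size w).
Proof.
rewrite mould_log_len1; elim: n w => [|n IH] w Hw; first by rewrite /= /mould_one coef1.
rewrite [mould_pow _ _ _]/= -/(mould_pow _ n) /mould_mul exprS coefM.
apply: eq_bigr => i _; have Hi : (i <= size w)%N by rewrite -ltnS.
rewrite IH; last by rewrite size_drop leq_subLR (leq_trans Hw) // leq_addl.
by rewrite size_drop size_takel // /log1p_poly coef_poly ltnS (leq_trans Hi Hw).
Qed.

Lemma mould_exp_log_len1 w : mould_exp (mould_log mould_len1) w = (size w <= 1)%N%:R.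
Proof.
rewrite /mould_exp.
under eq_bigr do rewrite (mould_pow_log_len1 _ (leqnn (size w))) -coefZ.
by rewrite -coef_sum coef_exp_log1p_poly.
Qed.

End LengthOneMould.
Arguments mould_len1 {C T}.

Section LowestTerm.
Variables (R : realType) (nu : nat).
Local Notation C := R[i].
Local Notation mi := (mi nu).

Definition lowest_term (a : fseries R nu) (c : C) (k0 : mi) :=
  forall l, (mtot l <= mtot k0)%N -> a l = (l == k0)%:R * c.

Lemma lowest_term_smul a b c1 c2 k1 k2 : lowest_term a c1 k1 -> lowest_term b c2 k2 ->
  lowest_term (smul a b) (c1 * c2) (madd k1 k2).
Proof.
move=> Ha Hb l; rewrite mtotD => Hl; rewrite /smul.
rewrite (eq_bigr (fun j => (j == k1)%:R * (c1 * b (msub l j)))); last first.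
  move=> j Hjl; case: (leqP (mtot j) (mtot k1)) => Hj1; first by rewrite Ha // mulrA.
  have Hs : (mtot (msub l j) < mtot k2)%N.
    by rewrite mtotB //; have := leq_mtot Hjl; lia.
  rewrite (_ : (j == k1) = false); last by apply: contraTF Hj1 => /eqP ->; rewrite ltnn.
  rewrite [b _]Hb ?(ltnW Hs) // (_ : (msub l j == k2) = false) ?mul0r ?mulr0 //.
  by apply: contraTF Hs => /eqP ->; rewrite ltnn.
rewrite -big_filter sum_seq_delta; last by rewrite filter_uniq // uniq_mbox.
rewrite mem_filter mem_mbox.
case: (boolP [forall i, k1 i <= l i]%N) => Hkl /=; last first.
  rewrite mul0r; case: eqP => [E|_]; last by rewrite mul0r.
  by case/negP: Hkl; apply/forallP => i; rewrite E ffunE leq_addr.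
rewrite (leq_mtot Hkl) mul1r Hb; last by rewrite mtotB // leq_subLR.
have -> : (msub l k1 == k2) = (l == madd k1 k2).
  apply/eqP/eqP => [<-|->]; apply/ffunP => i; rewrite !ffunE ?addKn //.
  by rewrite subnKC //; move/forallP: Hkl.
by rewrite mulrCA.
Qed.

Lemma lowest_term_sone : lowest_term (@sone R nu) 1 (Defs.mzero nu).
Proof. by move=> l _; rewrite /sone mulr1. Qed.

Lemma lowest_term_spow a c k n : lowest_term a c k ->
  lowest_term (spow a n) (c ^+ n) (mscale n k).
Proof.
move=> Ha; elim: n => [|n IH].
  rewrite (_ : mscale 0 k = Defs.mzero nu); first exact: lowest_term_sone.
  by apply/ffunP => i; rewrite !ffunE.
rewrite (_ : mscale n.+1 k = madd k (mscale n k)) ?exprS; first exact: lowest_term_smul.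
by apply/ffunP => i; rewrite !ffunE mulSn.
Qed.

Variables (lam : 'I_nu -> C) (h : 'I_nu -> fseries R nu).
Hypothesis hord : order_ge2 h.

Lemma lowest_term_fcomp i : lowest_term (fcomp lam h i) (cexp (lam i)) (unitmi i).
Proof.
have mtot_unit : mtot (unitmi i) = 1%N.
  by rewrite /mtot (bigD1 i) //= big1 ?ffunE ?eqxx // => j /negbTE Hj; rewrite ffunE Hj.
by move=> l; rewrite mtot_unit => Hl; rewrite /fcomp hord ?addr0 1?mulrC.
Qed.

Lemma lowest_term_Fop k : lowest_term (Fop lam h k) (elam lam (mdeg k)) k.
Proof.
have foldr_lowest (s : seq 'I_nu) :
    lowest_term (foldr (@smul R nu) (@sone R nu) [seq spow (fcomp lam h i) (k i) | i <- s])
      (\prod_(i <- s) cexp (lam i) ^+ k i) [ffun j => \sum_(i <- s) k i * (j == i)]%N.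
  elim: s => [|i s IH] /=.
    rewrite big_nil (_ : [ffun _ => _] = Defs.mzero nu); first exact: lowest_term_sone.
    by apply/ffunP => j; rewrite !ffunE big_nil.
  rewrite big_cons (_ : [ffun _ => _] = madd (mscale (k i) (unitmi i))
                                             [ffun j => \sum_(i <- s) k i * (j == i)]%N).
    exact/lowest_term_smul/IH/lowest_term_spow/lowest_term_fcomp.
  by apply/ffunP => j; rewrite !ffunE big_cons eq_sym.
have := foldr_lowest (enum 'I_nu).
rewrite (_ : [ffun _ => _] = k); last first.
  apply/ffunP => j; rewrite ffunE big_enum /= (bigD1 j) //= eqxx muln1 big1 ?addn0 //.
  by move=> i /negbTE; rewrite eq_sym => ->; rewrite muln0.
rewrite /elam (big_morph (@cexp R) (@cexpD R) (cexp0 R)) big_enum /=.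
by congr lowest_term; apply: eq_bigr => i _; rewrite ffunE -pmulrn mulr_natr cexpMn.
Qed.

End LowestTerm.

Section MouldExpansions.
Variables (R : realType) (nu : nat).
Local Notation C := R[i].
Local Notation mi := (mi nu).
Local Notation deg := (deg nu).
Variables (lam : 'I_nu -> C) (h : 'I_nu -> fseries R nu).

Lemma FPoin_mould_sum (P : pred deg) (Op : deg -> op R nu) M :
  M [::] = 1 -> Fop lam h = opcomp (Flin lam) (mould_sum P M Op) ->
  forall r, exists M', M' [::] = 1 /\ FPoin lam h r = opcomp (Flin lam) (mould_sum P M' Op).
Proof.
move=> M1 EF; elim => [|r [M' [M'1 E]]]; first by exists M.
exact: (PoinStep_mould_sum M'1 E).
Qed.

Lemma mould_sum_len1 (P : pred deg) (Op : deg -> op R nu) :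
  (forall k l, Op (mdiff l k) k l != 0 -> admissible P k l) ->
  mould_sum P mould_len1 Op = fun k l => Op (mdiff l k) k l.
Proof.
move=> HOp; apply/funext => k; apply/funext => l.
transitivity (if admissible P k l then Op (mdiff l k) k l else 0); last first.
  by case: ifP => // Hs; apply/esym/eqP; apply: contraFT Hs; apply: HOp.
rewrite mould_sum_rec /mould_len1 /= mul0r add0r -(sum_mbox_delta
  (fun x => if admissible P k x then Op (mdiff x k) k x else 0)).
apply: eq_bigr => x _.
rewrite (@eq_mould_sum _ _ P Op _ mould_one) ?mould_sum_one; last first.
  by move=> w; rewrite /mould_shift /mould_one size_rcons.
by rewrite /opid; case: ifP => _; rewrite ?mulr0 // mulrC.
Qed.

Hypothesis hord : order_ge2 h.
Variables (A Acal : pred deg).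
Hypothesis HA : forall n, op_nonzero (Bfam lam h n) -> A n.
Hypothesis HAcal : forall m, op_nonzero (Dfam lam h m) -> Acal m.

Lemma Bpart_FopE k l : Bpart lam (Fop lam h) k l = Bfam lam h (mdiff l k) k l.
Proof. by rewrite /Bfam /Defs.hom eqxx. Qed.

Lemma admissible_Bfam k l : Bfam lam h (mdiff l k) k l != 0 -> admissible A k l.
Proof.
move=> H; apply/andP; split; last by apply: HA; exists k, l.
move: H; rewrite -Bpart_FopE; apply: contraR; rewrite -leqNgt => Hlk.
rewrite /Bpart /opadd /opopp Flininv_compE (lowest_term_Fop lam hord) // /opid.
apply/eqP; case: (eqVneq l k) => [->|_]; last by rewrite !mul0r subrr.
by rewrite mul1r mulfV ?elam_neq0 ?subrr.
Qed.

Lemma admissible_Dfam k l : Dfam lam h (mdiff l k) k l != 0 -> admissible Acal k l.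
Proof.
move=> H; apply/andP; split; last by apply: HAcal; exists k, l.
move: H; rewrite /Dfam /Defs.hom eqxx /Dpart /oplog; apply: contraR.
rewrite -leqNgt -subn_eq0 => /eqP ->.
by rewrite big_mkcond big_ord_recl big_ord0 /= addr0.
Qed.

Lemma Bpart_Fop_mould_sum : Bpart lam (Fop lam h) = mould_sum A mould_len1 (Bfam lam h).
Proof.
rewrite (mould_sum_len1 admissible_Bfam).
by apply/funext => k; apply/funext => l; rewrite Bpart_FopE.
Qed.

Lemma Fop_mould_sum_Bfam : Fop lam h =
  opcomp (Flin lam) (mould_sum A (fun w => (size w <= 1)%N%:R) (Bfam lam h)).
Proof.
apply/funext => k; apply/funext => l.
rewrite Flin_compE (@eq_mould_sum _ _ _ _ _ (fun w => 1 * mould_one w + 1 * mould_len1 w));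
  last by move=> w; rewrite !mul1r /mould_one /mould_len1; case: (size w) => [|[|s]] /=;
    rewrite ?addr0 ?add0r.
rewrite mould_sum_lin !mul1r mould_sum_one -Bpart_Fop_mould_sum.
by rewrite /Bpart /opadd /opopp Flininv_compE addrC subrK mulfVK ?elam_neq0.
Qed.

(* exp(log(F_lin^-1 F)) = F_lin^-1 F, computed on the B-mould side. *)
Lemma Fop_mould_sum_Dfam : Fop lam h =
  opcomp (Flin lam) (mould_sum Acal (mould_exp mould_len1) (Dfam lam h)).
Proof.
have len1_nil : @mould_len1 C deg [::] = 0 by [].
have ED : mould_sum Acal mould_len1 (Dfam lam h) =
    oplog (mould_sum A mould_len1 (Bfam lam h)).
  rewrite (mould_sum_len1 admissible_Dfam) -Bpart_Fop_mould_sum.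
  by apply/funext => k; apply/funext => l; rewrite /Dfam /Defs.hom eqxx.
apply/funext => k; apply/funext => l.
rewrite {1}Fop_mould_sum_Bfam !Flin_compE -(opexp_mould_sum _ _ len1_nil) ED.
rewrite (oplog_mould_sum _ _ len1_nil) (opexp_mould_sum _ _ (mould_log_nil _)).
by congr (_ * _); apply: eq_mould_sum => w; rewrite mould_exp_log_len1.
Qed.

End MouldExpansions.

Unset Implicit Arguments.
Set Strict Implicit.

Theorem mainTheorem9 (R : realType) (nu : nat) (lam : 'I_nu -> R[i])
    (h : 'I_nu -> fseries R nu) :
  (0 < nu)%N -> order_ge2 h -> convergent h ->
  forall (A Acal : pred (deg nu)),
    add_closed A -> add_closed Acal ->
    (forall n, op_nonzero (Bfam lam h n) -> A n) ->
    (forall m, op_nonzero (Dfam lam h m) -> Acal m) ->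
  forall r : nat,
  exists (Poin poin : seq (deg nu) -> R[i]),
    FPoin lam h r = opcomp (Flin lam) (mould_sum Acal Poin (Dfam lam h)) /\
    FPoin lam h r = opcomp (Flin lam) (mould_sum A poin (Bfam lam h)).
Proof.
move=> _ hord _ A Acal _ _ HA HAcal r.
have [Poin [_ EPoin]] := FPoin_mould_sum (mould_exp_nil _) (Fop_mould_sum_Dfam hord HA HAcal) r.
have [poin [_ Epoin]] := FPoin_mould_sum erefl (Fop_mould_sum_Bfam hord HA) r.
by exists Poin, poin.
Qed.
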